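(* Let $\Omega\subset\mathbb{R}^2$ be the unit disc. Fix $r_1\in(0,1)$ and let $\sigma_1,\sigma_2>0$. If the Neumann-to-Dirichlet maps satisfy $R_{\sigma_1,r_1}=R_{\sigma_2,r_1}$ (as maps $H^{-1/2}(\partial\Omega)\to H^{1/2}(\partial\Omega)$), then $\sigma_1=\sigma_2$.
   Context: Polar coordinates $(r,\phi)$ on the unit disc; $I_n,K_n$ are the modified Bessel functions of first and second kind of order $n$; $g_n=(g,e^{in\phi})$. For $r_1\in(0,1)$, $\sigma>0$ and $g\in H^{-1/2}(\partial\Omega)$, let $\psi$ solve $\frac{1}{r}\partial_r(r\partial_r\psi)+\frac{1}{r^2}\partial_\phi^2\psi-\sigma^{-1}\psi=0$ for $0<r<r_1$; $\frac{1}{r}\partial_r(r\partial_r\psi)+\frac{1}{r^2}\partial_\phi^2\psi-\psi=0$ for $r_1<r<1$; $\psi|_{r=r_1}^+=\psi|_{r=r_1}^-$, $\partial_r\psi|_{r=r_1}^+=\sigma\,\partial_r\psi|_{r=r_1}^-$ ($\pm$ = limits from outside/inside $r=r_1$); $\partial_r\psi|_{r=1}=g$; $\psi$ bounded at $r=0$. The Neumann-to-Dirichlet map is $R_{\sigma,r_1}(g)=\psi|_{r=1}$. Explicitly, with $D(x,y)=I_n(x)K_n(y)-K_n(x)I_n(y)$ and $D_{r,s}=\partial_x^r\partial_y^sD$, $R_{\sigma,r_1}(g)=\sum_{n\in\mathbb{Z}}\frac{I_n(r_1/\sqrt{\sigma})D_{0,1}(1,r_1)-\sigma I_n'(r_1/\sqrt{\sigma})D(1,r_1)}{I_n(r_1/\sqrt{\sigma})D_{1,1}(1,r_1)-\sigma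 I_n'(r_1/\sqrt{\sigma})D_{1,0}(1,r_1)}g_ne^{in\phi}$. (This models the Schrödinger equation with piecewise constant potential $\widetilde U=\widetilde E+\sigma^{-1}$ in the core and $\widetilde E+1$ in the shell.) *)

From Stdlib Require Import Reals ZArith.
From Coquelicot Require Import Coquelicot.
Open Scope R_scope.

Definition besselI (n : Z) (x : R) : R :=
  let m := Z.abs_nat n in
  Series (fun k => (x / 2) ^ (2 * k + m) / (INR (fact k) * INR (fact (k + m)))).

Definition besselK (n : Z) (x : R) : R :=
  RInt_gen (fun t => exp (- x * cosh t) * cosh (IZR n * t))
           (at_point 0) (Rbar_locally p_infty).

Definition Dn (n : Z) (x y : R) : R :=
  besselI n x * besselK n y - besselK n x * besselI n y.
Definition Dn01 (n : Z) (x y : R) : R := Derive (fun y' => Dn n x y') y.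
Definition Dn10 (n : Z) (x y : R) : R := Derive (fun x' => Dn n x' y) x.
Definition Dn11 (n : Z) (x y : R) : R :=
  Derive (fun x' => Derive (fun y' => Dn n x' y') y) x.

(* Fourier multiplier of the Neumann-to-Dirichlet map R_{sigma,r1} on the
   n-th mode.  The factor "sigma I_n'(r1/sqrt sigma)" is read as
   sigma * d/dr [I_n(r/sqrt sigma)] at r = r1. *)
Definition ntd_mult (sigma r1 : R) (n : Z) : R :=
  let a := besselI n (r1 / sqrt sigma) in
  let b := sigma * Derive (fun r => besselI n (r / sqrt sigma)) r1 in
  (a * Dn01 n 1 r1 - b * Dn n 1 r1) / (a * Dn11 n 1 r1 - b * Dn10 n 1 r1).

(* Boundary data g on the unit circle are represented by their Fourier
   coefficients g_n = (g, e^{i n phi}), n in Z.  g is in H^{-1/2}(dOmega)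
   iff sum_n (1+n^2)^{-1/2} |g_n|^2 < oo. *)
Definition in_Hmhalf (g : Z -> C) : Prop :=
  ex_series (fun k : nat => Cmod (g (Z.of_nat k)) ^ 2 / sqrt (1 + INR k ^ 2)) /\
  ex_series (fun k : nat => Cmod (g (- Z.of_nat k)%Z) ^ 2 / sqrt (1 + INR k ^ 2)).

Definition NtD (sigma r1 : R) (g : Z -> C) : Z -> C :=
  fun n => Cmult (RtoC (ntd_mult sigma r1 n)) (g n).

From Stdlib Require Import Reals ZArith Lra Lia.
From Coquelicot Require Import Coquelicot.
Open Scope R_scope.

(* There the multiplier is the Moebius expression
   (A P' - B P) / (A Q' - B Q) in (A, B) = (I_0(r1/sqrt sigma), sqrt sigma I_0'(r1/sqrt sigma)),
   where P = D(1,r1), P' = D_{0,1}(1,r1), Q = D_{1,0}(1,r1), Q' = D_{1,1}(1,r1).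
   Since P > 0 > P' and P'Q - PQ' = - W(1) W(r1) <> 0 with W = I_0 K_0' - K_0 I_0' < 0,
   equal multipliers force equal ratios B/A.  Writing I_0(x) = C(x^2/4) with the
   Bessel-Clifford function C, B/A = (r1/2) C'(u)/C(u) with u = r1^2/(4 sigma), and C'/C is
   strictly decreasing because u (C C'' - C'^2) = C (C - C') - u C'^2 vanishes at 0
   and has derivative - C C'' < 0. *)

(** * Difference quotients and convexity *)

Definition slope (f : R -> R) (u v : R) : R := (f v - f u) / (v - u).

Definition diff_quot (f : R -> R) (x : R) (n : nat) : R :=
  slope f x (x + / (INR n + 1)).

Lemma diff_quot_step_pos (n : nat) : 0 < / (INR n + 1).
Proof. apply Rinv_0_lt_compat, INRp1_pos. Qed.

(* [Derive f x] is Coquelicot's limit of the difference quotients along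
   h_n = 1/(n+1) ([Rbar_loc_seq 0]), so it is the limit of [diff_quot f x]
   whenever that exists, even if [f] is only known to be right-differentiable. *)
Lemma Derive_diff_quot (f : R -> R) (x l : R) :
  is_lim_seq (diff_quot f x) l -> Derive f x = l.
Proof.
  intros Hl. unfold Derive, Lim.
  rewrite (Lim_seq_ext _ (diff_quot f x)), (is_lim_seq_unique _ _ Hl); [reflexivity|].
  intros n. unfold diff_quot, slope; simpl.
  rewrite Rplus_0_l. f_equal. ring.
Qed.

Lemma is_derive_diff_quot (f : R -> R) (x l : R) :
  is_derive f x l -> is_lim_seq (diff_quot f x) l.
Proof.
  intros Hd. apply is_derive_Reals in Hd. apply is_lim_seq_spec. intros eps.
  destruct (Hd eps (cond_pos eps)) as [delta Hdelta].
  assert (Hh := is_lim_seq_Rbar_loc_seq (Finite 0)). apply is_lim_seq_spec in Hh.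
  destruct (Hh delta) as [N HN]. exists N. intros n Hn.
  specialize (HN n Hn). simpl in HN. rewrite Rplus_0_l, Rminus_0_r in HN.
  unfold diff_quot, slope. replace (x + / (INR n + 1) - x) with (/ (INR n + 1)) by ring.
  apply Hdelta; [apply Rgt_not_eq, diff_quot_step_pos | exact HN].
Qed.

Lemma Derive_lin_comb (f g : R -> R) (c d x : R) :
  is_lim_seq (diff_quot f x) (Derive f x) ->
  is_lim_seq (diff_quot g x) (Derive g x) ->
  Derive (fun y => c * f y - d * g y) x = c * Derive f x - d * Derive g x.
Proof.
  intros Hf Hg. apply Derive_diff_quot.
  eapply is_lim_seq_ext;
    [| exact (is_lim_seq_minus' _ _ _ _ (is_lim_seq_scal_l _ c _ Hf) (is_lim_seq_scal_l _ d _ Hg))].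
  intros n. unfold diff_quot, slope, Rdiv. ring.
Qed.

Lemma Derive_le_0_of_antitone (f : R -> R) (x : R) :
  is_lim_seq (diff_quot f x) (Derive f x) ->
  (forall h, 0 < h -> f (x + h) <= f x) -> Derive f x <= 0.
Proof.
  intros Hlim Hanti.
  apply (is_lim_seq_le (diff_quot f x) (fun _ => 0) (Derive f x) 0);
    [intros n | exact Hlim | apply is_lim_seq_const]. unfold diff_quot, slope.
  assert (Hh := diff_quot_step_pos n). assert (Hf := Hanti _ Hh).
  replace (x + / (INR n + 1) - x) with (/ (INR n + 1)) by ring.
  unfold Rdiv. assert (Hinv := Rinv_0_lt_compat _ Hh). nra.
Qed.

Lemma slope_spec (f : R -> R) (u v : R) : u <> v -> f v = f u + slope f u v * (v - u).
Proof. intros Huv. unfold slope. field. lra. Qed.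

Definition convex_on_ray (a : R) (f : R -> R) : Prop :=
  forall u v w, a < u -> u < v -> v < w ->
  (w - u) * f v <= (w - v) * f u + (v - u) * f w.

Section ConvexDiffQuot.

Variables (a : R) (f : R -> R).
Hypothesis f_convex : convex_on_ray a f.

Lemma convex_slope_le_left (u v w : R) : a < u -> u < v -> v < w ->
  slope f u v <= slope f u w.
Proof.
  intros Hu Huv Hvw. assert (Hc := f_convex u v w Hu Huv Hvw).
  rewrite (slope_spec f u v), (slope_spec f u w) in Hc by lra.
  assert (0 < (v - u) * (w - u)) by (apply Rmult_lt_0_compat; lra).
  nra.
Qed.

Lemma convex_slope_le_right (u v w : R) : a < u -> u < v -> v < w ->
  slope f u v <= slope f v w.
Proof.
  intros Hu Huv Hvw. assert (Hc := f_convex u v w Hu Huv Hvw).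
  rewrite (slope_spec f v u), (slope_spec f v w) in Hc by lra.
  replace (slope f v u) with (slope f u v) in Hc by (unfold slope; field; lra).
  assert (0 < (v - u) * (w - v)) by (apply Rmult_lt_0_compat; lra).
  nra.
Qed.

Lemma convex_is_lim_diff_quot (x : R) : a < x -> is_lim_seq (diff_quot f x) (Derive f x).
Proof.
  intros Hx.
  destruct (ex_finite_lim_seq_decr (diff_quot f x) (slope f ((a + x) / 2) x)) as [l Hl].
  - intros n. unfold diff_quot.
    assert (Hh := diff_quot_step_pos (S n)).
    assert (Hlt : / (INR (S n) + 1) < / (INR n + 1)).
    { rewrite S_INR. assert (Hn := INRp1_pos n).
      apply Rinv_lt_contravar; [apply Rmult_lt_0_compat |]; lra. }
    apply convex_slope_le_left; lra.
  - intros n. apply convex_slope_le_right; [lra | lra |].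
    assert (Hh := diff_quot_step_pos n). lra.
  - rewrite (Derive_diff_quot _ _ _ Hl). exact Hl.
Qed.

End ConvexDiffQuot.

Lemma is_derive_pos_lt (f f' : R -> R) (a b : R) : a < b ->
  (forall c, a <= c <= b -> is_derive f c (f' c)) ->
  (forall c, a < c < b -> 0 < f' c) -> f a < f b.
Proof.
  intros Hab Hd Hpos.
  destruct (MVT_cor2 f f' a b Hab) as [c [Hmvt Hc]].
  - intros c Hc. apply is_derive_Reals, Hd, Hc.
  - specialize (Hpos c Hc). nra.
Qed.

Lemma is_derive_neg_lt (f f' : R -> R) (a b : R) : a < b ->
  (forall c, a <= c <= b -> is_derive f c (f' c)) ->
  (forall c, a < c < b -> f' c < 0) -> f b < f a.
Proof.
  intros Hab Hd Hneg.
  destruct (MVT_cor2 f f' a b Hab) as [c [Hmvt Hc]].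
  - intros c Hc. apply is_derive_Reals, Hd, Hc.
  - specialize (Hneg c Hc). nra.
Qed.

Lemma exp_le (a b : R) : a <= b -> exp a <= exp b.
Proof.
  intros [Hlt | ->]; [apply Rlt_le, exp_increasing, Hlt | apply Rle_refl].
Qed.

Lemma exp_convex (p q r : R) : p < q -> q < r ->
  (r - p) * exp q <= (r - q) * exp p + (q - p) * exp r.
Proof.
  intros Hpq Hqr.
  assert (Hp : exp q * (1 + (p - q)) <= exp p).
  { replace (exp p) with (exp q * exp (p - q)) by (rewrite <- exp_plus; f_equal; ring).
    apply Rmult_le_compat_l; [apply Rlt_le, exp_pos | apply exp_ineq1_le]. }
  assert (Hr : exp q * (1 + (r - q)) <= exp r).
  { replace (exp r) with (exp q * exp (r - q)) by (rewrite <- exp_plus; f_equal; ring).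
    apply Rmult_le_compat_l; [apply Rlt_le, exp_pos | apply exp_ineq1_le]. }
  nra.
Qed.

Lemma cosh_pos (t : R) : 0 < cosh t.
Proof. unfold cosh. assert (H1 := exp_pos t). assert (H2 := exp_pos (- t)). lra. Qed.

Lemma cosh_ge_half_succ (t : R) : (1 + t) / 2 <= cosh t.
Proof. unfold cosh. assert (H1 := exp_ineq1_le t). assert (H2 := exp_pos (- t)). lra. Qed.

Lemma Series_ge_0 (a : nat -> R) : ex_series a -> (forall n, 0 <= a n) -> 0 <= Series a.
Proof.
  intros Hex Ha.
  replace 0 with (Series (fun n => 0 * a n)) by (rewrite Series_scal_l; ring).
  apply Series_le; [intros n; specialize (Ha n); lra | exact Hex].
Qed.

Lemma PSeries_ge_coef0 (a : nat -> R) (u : R) :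
  CV_radius a = p_infty -> (forall n, 0 <= a n) -> 0 <= u -> a 0%nat <= PSeries a u.
Proof.
  intros Hrad Ha Hu.
  assert (Hin : forall b : nat -> R, CV_radius b = p_infty -> ex_pseries b u).
  { intros b Hb. apply CV_radius_inside. rewrite Hb. exact I. }
  rewrite PSeries_decr_1 by (apply Hin, Hrad).
  assert (0 <= PSeries (PS_decr_1 a) u).
  { apply Series_ge_0.
    - apply ex_pseries_R, Hin. rewrite CV_radius_decr_1. exact Hrad.
    - intros n. apply Rmult_le_pos; [apply Ha | apply pow_le, Hu]. }
  nra.
Qed.

(** * The Bessel-Clifford function and I_0 *)

Definition clifford_coef (n : nat) : R := / (INR (fact n) * INR (fact n)).
Definition clifford : R -> R := PSeries clifford_coef.
Definition clifford' : R -> R := PSeries (PS_derive clifford_coef).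
Definition clifford'' : R -> R := PSeries (PS_derive (PS_derive clifford_coef)).

Lemma clifford_coef_pos (n : nat) : 0 < clifford_coef n.
Proof.
  apply Rinv_0_lt_compat, Rmult_lt_0_compat; apply lt_0_INR, lt_O_fact.
Qed.

Lemma PS_derive_pos (a : nat -> R) : (forall n, 0 < a n) -> forall n, 0 < PS_derive a n.
Proof. intros Ha n. apply Rmult_lt_0_compat; [apply lt_0_INR; lia | apply Ha]. Qed.

Lemma CV_radius_clifford_coef : CV_radius clifford_coef = p_infty.
Proof.
  apply CV_radius_infinite_DAlembert.
  - intros n. apply Rgt_not_eq, clifford_coef_pos.
  - assert (Hinv := is_lim_seq_Rbar_loc_seq (Finite 0)).
    assert (Hsq := is_lim_seq_mult' _ _ _ _ Hinv Hinv). rewrite Rmult_0_l in Hsq.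
    eapply is_lim_seq_ext; [| exact Hsq].
    intros n. simpl. rewrite Rplus_0_l.
    replace (clifford_coef (S n) / clifford_coef n) with (/ (INR n + 1) * / (INR n + 1)).
    + assert (Hn := Rinv_0_lt_compat _ (INRp1_pos n)).
      rewrite Rabs_pos_eq; [reflexivity | nra].
    + unfold clifford_coef. change (fact (S n)) with (S n * fact n)%nat.
      rewrite mult_INR, S_INR.
      assert (Hf := INR_fact_neq_0 n). assert (Hn := INRp1_pos n).
      field. lra.
Qed.

Lemma CV_radius_clifford_coef' : CV_radius (PS_derive clifford_coef) = p_infty.
Proof. rewrite CV_radius_derive. exact CV_radius_clifford_coef. Qed.

Lemma CV_radius_clifford_coef'' : CV_radius (PS_derive (PS_derive clifford_coef)) = p_infty.
Proof. rewrite CV_radius_derive. exact CV_radius_clifford_coef'. Qed.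

Lemma is_derive_PSeries_entire (a : nat -> R) (u : R) :
  CV_radius a = p_infty -> is_derive (PSeries a) u (PSeries (PS_derive a) u).
Proof. intros Hrad. apply is_derive_PSeries. rewrite Hrad. exact I. Qed.

Lemma is_derive_clifford (u : R) : is_derive clifford u (clifford' u).
Proof. exact (is_derive_PSeries_entire _ u CV_radius_clifford_coef). Qed.

Lemma is_derive_clifford' (u : R) : is_derive clifford' u (clifford'' u).
Proof. exact (is_derive_PSeries_entire _ u CV_radius_clifford_coef'). Qed.

Lemma clifford_ge_1 (u : R) : 0 <= u -> 1 <= clifford u.
Proof.
  intros Hu. replace 1 with (clifford_coef 0) by (unfold clifford_coef; simpl; field).
  apply PSeries_ge_coef0; [exact CV_radius_clifford_coef | | exact Hu].
  intros n. apply Rlt_le, clifford_coef_pos.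
Qed.

Lemma clifford'_ge_1 (u : R) : 0 <= u -> 1 <= clifford' u.
Proof.
  intros Hu. replace 1 with (PS_derive clifford_coef 0)
    by (unfold PS_derive, clifford_coef; simpl; field).
  apply PSeries_ge_coef0; [exact CV_radius_clifford_coef' | | exact Hu].
  intros n. apply Rlt_le, PS_derive_pos, clifford_coef_pos.
Qed.

Lemma clifford''_pos (u : R) : 0 <= u -> 0 < clifford'' u.
Proof.
  intros Hu. assert (H0 := PS_derive_pos _ (PS_derive_pos _ clifford_coef_pos) 0).
  eapply Rlt_le_trans; [exact H0|].
  apply PSeries_ge_coef0; [exact CV_radius_clifford_coef'' | | exact Hu].
  intros n. apply Rlt_le, PS_derive_pos, PS_derive_pos, clifford_coef_pos.
Qed.

Lemma clifford_ode (u : R) : u * clifford'' u + clifford' u = clifford u.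
Proof.
  unfold clifford, clifford', clifford''.
  rewrite <- PSeries_incr_1, <- PSeries_plus.
  - apply PSeries_ext. intros [|n]; unfold PS_plus, PS_incr_1, PS_derive, clifford_coef.
    + unfold plus, zero; simpl. field.
    + change (plus ?x ?y) with (x + y).
      change (fact (S (S n))) with (S (S n) * (S n * fact n))%nat.
      change (fact (S n)) with (S n * fact n)%nat.
      rewrite !mult_INR, !S_INR.
      assert (Hf := INR_fact_neq_0 n). assert (Hn := pos_INR n).
      field. repeat split; lra.
  - apply ex_pseries_incr_1, CV_radius_inside. rewrite CV_radius_clifford_coef''. exact I.
  - apply CV_radius_inside. rewrite CV_radius_clifford_coef'. exact I.
Qed.

Definition clifford_gap (u : R) : R :=
  clifford u * (clifford u - clifford' u) - u * clifford' u ^ 2.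

Lemma clifford_gap_eq (u : R) :
  clifford_gap u = u * (clifford u * clifford'' u - clifford' u ^ 2).
Proof. unfold clifford_gap. rewrite <- (clifford_ode u). ring. Qed.

Lemma is_derive_clifford_gap (u : R) :
  is_derive clifford_gap u (- clifford u * clifford'' u).
Proof.
  assert (D0 := is_derive_clifford u). assert (D1 := is_derive_clifford' u).
  unfold clifford_gap. auto_derive.
  - repeat split; eexists; eassumption.
  - change (fun x => clifford x) with clifford. change (fun x => clifford' x) with clifford'.
    rewrite (is_derive_unique _ _ _ D0), (is_derive_unique _ _ _ D1).
    rewrite <- (clifford_ode u). ring.
Qed.

Lemma clifford_gap_0 : clifford_gap 0 = 0.
Proof.
  unfold clifford_gap, clifford, clifford'. rewrite !PSeries_0.
  unfold PS_derive, clifford_coef. simpl. field.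
Qed.

Lemma clifford_gap_neg (u : R) : 0 < u -> clifford_gap u < 0.
Proof.
  intros Hu. rewrite <- clifford_gap_0.
  apply (is_derive_neg_lt clifford_gap (fun c => - clifford c * clifford'' c) 0 u Hu);
    [intros c _; apply is_derive_clifford_gap |].
  intros c Hc. assert (H0 := clifford_ge_1 c ltac:(lra)).
  assert (H2 := clifford''_pos c ltac:(lra)). nra.
Qed.

Definition clifford_ratio (u : R) : R := clifford' u / clifford u.

Lemma clifford_ratio_decreasing (u v : R) :
  0 < u -> u < v -> clifford_ratio v < clifford_ratio u.
Proof.
  intros Hu Huv.
  apply (is_derive_neg_lt _
           (fun c => (clifford'' c * clifford c - clifford' c * clifford' c) / clifford c ^ 2)
           u v Huv).
  - intros c Hc. apply is_derive_div; [apply is_derive_clifford' | apply is_derive_clifford |].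
    assert (H0 := clifford_ge_1 c ltac:(lra)). lra.
  - intros c Hc. assert (H0 := clifford_ge_1 c ltac:(lra)).
    assert (Hgap := clifford_gap_neg c ltac:(lra)). rewrite clifford_gap_eq in Hgap.
    apply Rdiv_neg_pos; [nra | apply pow_lt; lra].
Qed.

Lemma clifford_ratio_inj (u v : R) :
  0 < u -> 0 < v -> clifford_ratio u = clifford_ratio v -> u = v.
Proof.
  intros Hu Hv Heq.
  destruct (Rtotal_order u v) as [Hlt | [Heq' | Hgt]]; [| exact Heq' |].
  - apply clifford_ratio_decreasing in Hlt; lra.
  - apply clifford_ratio_decreasing in Hgt; lra.
Qed.

Lemma besselI0_clifford (x : R) : besselI 0 x = clifford (x * x / 4).
Proof.
  unfold besselI, clifford, PSeries. change (Z.abs_nat 0) with 0%nat.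
  apply Series_ext. intros n. rewrite !Nat.add_0_r, pow_mult.
  unfold clifford_coef. assert (Hf := INR_fact_neq_0 n).
  replace ((x / 2) ^ 2) with (x * x / 4) by field. field. exact Hf.
Qed.

Lemma is_derive_besselI0 (x : R) :
  is_derive (besselI 0) x (clifford' (x * x / 4) * (x / 2)).
Proof.
  apply (is_derive_ext (fun y => clifford (y * y / 4)));
    [intros y; symmetry; apply besselI0_clifford |].
  assert (D := is_derive_clifford (x * x / 4)).
  auto_derive; [eexists; exact D |].
  change (fun y => clifford y) with clifford. unfold Rdiv in *.
  rewrite (is_derive_unique _ _ _ D). field.
Qed.

Lemma besselI0_diff_quot (x : R) :
  is_lim_seq (diff_quot (besselI 0) x) (Derive (besselI 0) x).
Proof.
  rewrite (is_derive_unique _ _ _ (is_derive_besselI0 x)).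
  apply is_derive_diff_quot, is_derive_besselI0.
Qed.

Lemma besselI0_pos (x : R) : 0 < besselI 0 x.
Proof.
  rewrite besselI0_clifford. assert (H := clifford_ge_1 (x * x / 4) ltac:(nra)). lra.
Qed.

Lemma Derive_besselI0_pos (x : R) : 0 < x -> 0 < Derive (besselI 0) x.
Proof.
  intros Hx. rewrite (is_derive_unique _ _ _ (is_derive_besselI0 x)).
  assert (H := clifford'_ge_1 (x * x / 4) ltac:(nra)). nra.
Qed.

Lemma besselI0_lt (x y : R) : 0 <= x -> x < y -> besselI 0 x < besselI 0 y.
Proof.
  intros Hx Hxy.
  apply (is_derive_pos_lt _ (fun c => clifford' (c * c / 4) * (c / 2)) x y Hxy);
    [intros c _; apply is_derive_besselI0 |].
  intros c Hc. assert (H := clifford'_ge_1 (c * c / 4) ltac:(nra)). nra.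
Qed.

(** * Improper integrals and K_0 *)

Lemma filter_prod_0_infty_le :
  filter_prod (at_point 0) (Rbar_locally p_infty) (fun ab : R * R => 0 <= fst ab <= snd ab).
Proof.
  apply Filter_prod with (fun a => a = 0) (fun b => 0 < b); [reflexivity | exists 0; auto |].
  intros a b -> Hb. simpl. lra.
Qed.

Lemma is_RInt_gen_le_0_infty (f g : R -> R) (lf lg : R) :
  (forall t, 0 <= t -> f t <= g t) ->
  is_RInt_gen f (at_point 0) (Rbar_locally p_infty) lf ->
  is_RInt_gen g (at_point 0) (Rbar_locally p_infty) lg -> lf <= lg.
Proof.
  intros Hfg Hf Hg.
  assert (Hd := is_RInt_gen_minus _ _ _ _ Hg Hf).
  assert (Hnorm : norm (minus lg lf) <= minus lg lf).
  { set (h := fun t => minus (g t) (f t)).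
    apply (RInt_gen_norm (V := R_CompleteNormedModule) h h _ _
             (filter_imp _ _ (fun ab Hab => proj2 Hab) filter_prod_0_infty_le));
      [| exact Hd | exact Hd].
    refine (filter_imp _ _ _ filter_prod_0_infty_le). intros [a b] Hab t Ht; simpl in *.
    assert (H := Hfg t ltac:(lra)). unfold h, minus, plus, opp, norm; simpl.
    unfold abs; simpl. rewrite Rabs_pos_eq; lra. }
  assert (H := norm_ge_0 (minus lg lf)).
  unfold minus, plus, opp in *; simpl in *. lra.
Qed.

Section NonnegImproperIntegral.

Variable f : R -> R.
Hypothesis f_cont : forall t, continuous f t.
Hypothesis f_ge_0 : forall t, 0 <= f t.
Variable M : R.
Hypothesis RInt_f_le : forall b, 0 <= b -> RInt f 0 b <= M.

Lemma ex_RInt_cont (a b : R) : ex_RInt f a b.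
Proof. apply (ex_RInt_continuous (V := R_CompleteNormedModule)). intros; apply f_cont. Qed.

Lemma RInt_0_le_mono (b b' : R) : 0 <= b -> b <= b' -> RInt f 0 b <= RInt f 0 b'.
Proof.
  intros Hb Hbb'. rewrite <- (RInt_Chasles f 0 b b') by apply ex_RInt_cont.
  assert (0 <= RInt f b b') by (apply RInt_ge_0; auto using ex_RInt_cont).
  change (plus ?u ?v) with (u + v). lra.
Qed.

Lemma is_RInt_gen_nonneg_bounded :
  exists l, is_RInt_gen f (at_point 0) (Rbar_locally p_infty) l /\
            forall b, 0 <= b -> RInt f 0 b <= l.
Proof.
  assert (Hincr : forall n, RInt f 0 (INR n) <= RInt f 0 (INR (S n)))
    by (intros n; apply RInt_0_le_mono; [apply pos_INR | rewrite S_INR; lra]).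
  destruct (ex_finite_lim_seq_incr (fun n => RInt f 0 (INR n)) M Hincr)
    as [l Hl]; [intros n; apply RInt_f_le, pos_INR |].
  assert (Hle : forall b, 0 <= b -> RInt f 0 b <= l).
  { intros b Hb. destruct (INR_unbounded b) as [m Hm].
    apply Rle_trans with (RInt f 0 (INR m)); [apply RInt_0_le_mono; lra |].
    exact (is_lim_seq_incr_compare _ _ Hl Hincr m). }
  exists l. split; [| exact Hle].
  intros P [eps HP]. apply is_lim_seq_spec in Hl. destruct (Hl eps) as [N HN].
  apply Filter_prod with (fun a => a = 0) (fun b => INR N < b);
    [reflexivity | exists (INR N); auto |].
  intros a b -> Hb. exists (RInt f 0 b). split.
  - apply (RInt_correct (V := R_CompleteNormedModule)), ex_RInt_cont.
  - apply HP. change (Rabs (RInt f 0 b - l) < eps).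
    assert (HN' := HN N (Nat.le_refl _)).
    assert (HNb : RInt f 0 (INR N) <= RInt f 0 b)
      by (apply RInt_0_le_mono; [apply pos_INR | lra]).
    assert (Hbl := Hle b ltac:(generalize (pos_INR N); lra)).
    apply Rabs_def2 in HN'. apply Rabs_def1; lra.
Qed.

End NonnegImproperIntegral.

Definition besselK0_integrand (x t : R) : R := exp (- x * cosh t).

Lemma besselK0_integrand_cont (x t : R) : continuous (besselK0_integrand x) t.
Proof.
  apply (ex_derive_continuous (besselK0_integrand x)).
  unfold besselK0_integrand, cosh. auto_derive. exact I.
Qed.

Lemma RInt_besselK0_integrand_le (x b : R) : 0 < x -> 0 <= b ->
  RInt (besselK0_integrand x) 0 b <= 2 / x.
Proof.
  intros Hx Hb.
  set (g := fun t => exp (- x * (1 + t) / 2)).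
  set (G := fun t => - (2 / x) * exp (- x * (1 + t) / 2)).
  assert (HG : is_RInt g 0 b (minus (G b) (G 0))).
  { apply (is_RInt_derive (V := R_CompleteNormedModule)); intros t _.
    - unfold G, g. auto_derive; [exact I |]. unfold Rdiv. field. lra.
    - apply (ex_derive_continuous g). unfold g. auto_derive. exact I. }
  assert (Hle : RInt (besselK0_integrand x) 0 b <= RInt g 0 b).
  { apply RInt_le;
      [exact Hb | apply ex_RInt_cont, besselK0_integrand_cont | eexists; exact HG |].
    intros t Ht. unfold besselK0_integrand, g. apply exp_le.
    assert (H := cosh_ge_half_succ t). nra. }
  rewrite (is_RInt_unique _ _ _ _ HG) in Hle. unfold G, minus, plus, opp in Hle; simpl in Hle.
  assert (Hexp0 : exp (- x * (1 + 0) / 2) <= 1)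
    by (rewrite <- exp_0 at 2; apply exp_le; lra).
  assert (Hexpb := exp_pos (- x * (1 + b) / 2)).
  assert (H2x : 0 < 2 / x) by (apply Rdiv_lt_0_compat; lra).
  nra.
Qed.

Lemma besselK0_spec (x : R) : 0 < x ->
  is_RInt_gen (besselK0_integrand x) (at_point 0) (Rbar_locally p_infty) (besselK 0 x) /\
  forall b, 0 <= b -> RInt (besselK0_integrand x) 0 b <= besselK 0 x.
Proof.
  intros Hx.
  destruct (is_RInt_gen_nonneg_bounded (besselK0_integrand x) (besselK0_integrand_cont x)
              (fun t => Rlt_le _ _ (exp_pos _)) (2 / x)
              (fun b => RInt_besselK0_integrand_le x b Hx))
    as [l [Hl Hle]].
  replace (besselK 0 x) with l; [split; assumption |].
  symmetry. unfold besselK. apply is_RInt_gen_unique.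
  refine (is_RInt_gen_ext _ _ _ (filter_forall _ _) Hl).
  intros ab t _. unfold besselK0_integrand. simpl. rewrite Rmult_0_l, cosh_0. ring.
Qed.

Lemma besselK0_pos (x : R) : 0 < x -> 0 < besselK 0 x.
Proof.
  intros Hx. apply Rlt_le_trans with (RInt (besselK0_integrand x) 0 1);
    [| apply besselK0_spec; lra].
  apply RInt_gt_0; [lra | intros; apply exp_pos | intros; apply besselK0_integrand_cont].
Qed.

Lemma besselK0_antitone (x y : R) : 0 < x -> x <= y -> besselK 0 y <= besselK 0 x.
Proof.
  intros Hx Hxy.
  apply (is_RInt_gen_le_0_infty (besselK0_integrand y) (besselK0_integrand x));
    [| apply besselK0_spec; lra ..].
  intros t _. unfold besselK0_integrand. apply exp_le.
  assert (H := cosh_pos t). nra.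
Qed.

Lemma besselK0_convex : convex_on_ray 0 (besselK 0).
Proof.
  intros a b c Ha Hab Hbc.
  apply (is_RInt_gen_le_0_infty (fun t => (c - a) * besselK0_integrand b t)
           (fun t => (c - b) * besselK0_integrand a t + (b - a) * besselK0_integrand c t)).
  - intros t _. unfold besselK0_integrand. set (s := cosh t).
    assert (Hs : 0 < s) by apply cosh_pos.
    assert (H := exp_convex (- c * s) (- b * s) (- a * s) ltac:(nra) ltac:(nra)).
    apply Rmult_le_reg_l with s; [exact Hs | nra].
  - apply (is_RInt_gen_scal (V := R_NormedModule)), besselK0_spec. lra.
  - apply (is_RInt_gen_plus (V := R_NormedModule));
      apply (is_RInt_gen_scal (V := R_NormedModule)), besselK0_spec; lra.
Qed.

Lemma besselK0_diff_quot (x : R) : 0 < x ->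
  is_lim_seq (diff_quot (besselK 0) x) (Derive (besselK 0) x).
Proof. exact (convex_is_lim_diff_quot 0 (besselK 0) besselK0_convex x). Qed.

Lemma Derive_besselK0_nonpos (x : R) : 0 < x -> Derive (besselK 0) x <= 0.
Proof.
  intros Hx. apply Derive_le_0_of_antitone; [apply besselK0_diff_quot, Hx |].
  intros h Hh. apply besselK0_antitone; lra.
Qed.

(** * The Neumann-to-Dirichlet multiplier of the mode n = 0 *)

Definition wronskian0 (x : R) : R :=
  besselI 0 x * Derive (besselK 0) x - besselK 0 x * Derive (besselI 0) x.

Lemma wronskian0_neg (x : R) : 0 < x -> wronskian0 x < 0.
Proof.
  intros Hx. unfold wronskian0.
  assert (HI := besselI0_pos x). assert (HI' := Derive_besselI0_pos x Hx).
  assert (HK := besselK0_pos x Hx). assert (HK' := Derive_besselK0_nonpos x Hx).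
  nra.
Qed.

Lemma Dn01_eq (x y : R) : 0 < y ->
  Dn01 0 x y = besselI 0 x * Derive (besselK 0) y - besselK 0 x * Derive (besselI 0) y.
Proof.
  intros Hy. apply Derive_lin_comb; [apply besselK0_diff_quot, Hy | apply besselI0_diff_quot].
Qed.

Lemma Dn10_eq (x y : R) : 0 < x ->
  Dn10 0 x y = Derive (besselI 0) x * besselK 0 y - Derive (besselK 0) x * besselI 0 y.
Proof.
  intros Hx. unfold Dn10, Dn.
  rewrite (Derive_ext _ (fun x' => besselK 0 y * besselI 0 x' - besselI 0 y * besselK 0 x'))
    by (intros; ring).
  rewrite Derive_lin_comb; [ring | apply besselI0_diff_quot | apply besselK0_diff_quot, Hx].
Qed.

Lemma Dn11_eq (x y : R) : 0 < x -> 0 < y ->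
  Dn11 0 x y =
    Derive (besselI 0) x * Derive (besselK 0) y - Derive (besselK 0) x * Derive (besselI 0) y.
Proof.
  intros Hx Hy. unfold Dn11.
  rewrite (Derive_ext _ (fun x' =>
    Derive (besselK 0) y * besselI 0 x' - Derive (besselI 0) y * besselK 0 x')).
  - rewrite Derive_lin_comb; [ring | apply besselI0_diff_quot | apply besselK0_diff_quot, Hx].
  - intros t. change (Derive (fun y' => Dn 0 t y') y) with (Dn01 0 t y).
    rewrite Dn01_eq by exact Hy. ring.
Qed.

Lemma Dn_pos (x y : R) : 0 < y -> y < x -> 0 < Dn 0 x y.
Proof.
  intros Hy Hyx. unfold Dn.
  assert (HI := besselI0_lt y x ltac:(lra) Hyx). assert (HIy := besselI0_pos y).
  assert (HK := besselK0_antitone y x Hy ltac:(lra)). assert (HKx := besselK0_pos x ltac:(lra)).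
  nra.
Qed.

Lemma Dn01_neg (x y : R) : 0 < x -> 0 < y -> Dn01 0 x y < 0.
Proof.
  intros Hx Hy. rewrite Dn01_eq by exact Hy.
  assert (HI := besselI0_pos x). assert (HK' := Derive_besselK0_nonpos y Hy).
  assert (HK := besselK0_pos x Hx). assert (HI' := Derive_besselI0_pos y Hy).
  nra.
Qed.

Lemma Dn_cross_eq (x y : R) : 0 < x -> 0 < y ->
  Dn01 0 x y * Dn10 0 x y - Dn 0 x y * Dn11 0 x y = - wronskian0 x * wronskian0 y.
Proof.
  intros Hx Hy. rewrite Dn01_eq, Dn10_eq, Dn11_eq by assumption.
  unfold Dn, wronskian0. ring.
Qed.

Lemma mobius_ratio_inj (a1 b1 a2 b2 P P' Q Q' : R) :
  a1 * P' - b1 * P <> 0 -> a2 * P' - b2 * P <> 0 -> P' * Q - P * Q' <> 0 ->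
  (a1 * P' - b1 * P) / (a1 * Q' - b1 * Q) = (a2 * P' - b2 * P) / (a2 * Q' - b2 * Q) ->
  a1 * b2 = a2 * b1.
Proof.
  intros HN1 HN2 Hdet Heq.
  set (N1 := a1 * P' - b1 * P) in *. set (N2 := a2 * P' - b2 * P) in *.
  set (D1 := a1 * Q' - b1 * Q) in *. set (D2 := a2 * Q' - b2 * Q) in *.
  assert (Hquot_neq0 : forall N D, N <> 0 -> D <> 0 -> N / D <> 0)
    by (intros N D HN HD; apply Rmult_integral_contrapositive_currified, Rinv_neq_0_compat;
        assumption).
  (* Since [x / 0 = 0], vanishing denominators need separate cases. *)
  destruct (Req_dec D1 0) as [HD1 | HD1]; destruct (Req_dec D2 0) as [HD2 | HD2].
  - destruct (Req_dec (a1 * b2) (a2 * b1)) as [| Hne]; [assumption | exfalso].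
    assert (HQ : (a1 * b2 - a2 * b1) * Q = 0)
      by (transitivity (a2 * D1 - a1 * D2); [unfold D1, D2; ring | rewrite HD1, HD2; ring]).
    assert (HQ' : (a1 * b2 - a2 * b1) * Q' = 0)
      by (transitivity (b2 * D1 - b1 * D2); [unfold D1, D2; ring | rewrite HD1, HD2; ring]).
    apply Rmult_integral in HQ. apply Rmult_integral in HQ'.
    destruct HQ as [HQ | HQ]; [lra |]. destruct HQ' as [HQ' | HQ']; [lra |].
    apply Hdet. rewrite HQ, HQ'. ring.
  - rewrite HD1 in Heq. unfold Rdiv in Heq at 1. rewrite Rinv_0, Rmult_0_r in Heq.
    destruct (Hquot_neq0 N2 D2 HN2 HD2 (eq_sym Heq)).
  - rewrite HD2 in Heq. unfold Rdiv in Heq at 2. rewrite Rinv_0, Rmult_0_r in Heq.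
    destruct (Hquot_neq0 N1 D1 HN1 HD1 Heq).
  - assert (Hcross : N1 * D2 - N2 * D1 = 0).
    { replace (N1 * D2) with (N1 / D1 * (D1 * D2)) by (field; exact HD1).
      replace (N2 * D1) with (N2 / D2 * (D1 * D2)) by (field; exact HD2).
      rewrite Heq. ring. }
    replace (N1 * D2 - N2 * D1) with ((a2 * b1 - a1 * b2) * (P' * Q - P * Q')) in Hcross
      by (unfold N1, N2, D1, D2; ring).
    apply Rmult_integral in Hcross. destruct Hcross; [lra | contradiction].
Qed.

Lemma div_sqrt_sq_div_4 (sigma r : R) : 0 < sigma ->
  r / sqrt sigma * (r / sqrt sigma) / 4 = r * r / (4 * sigma).
Proof.
  intros Hs. assert (Hq := sqrt_lt_R0 _ Hs).
  replace (r / sqrt sigma * (r / sqrt sigma)) with (r * r / (sqrt sigma * sqrt sigma))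
    by (field; lra).
  rewrite sqrt_sqrt by lra. field. lra.
Qed.

Lemma besselI0_scaled (sigma r : R) : 0 < sigma ->
  besselI 0 (r / sqrt sigma) = clifford (r * r / (4 * sigma)).
Proof. intros Hs. rewrite besselI0_clifford, div_sqrt_sq_div_4 by exact Hs. reflexivity. Qed.

Lemma Derive_besselI0_scaled (sigma r : R) : 0 < sigma ->
  sigma * Derive (fun r' => besselI 0 (r' / sqrt sigma)) r =
    clifford' (r * r / (4 * sigma)) * (r / 2).
Proof.
  intros Hs. assert (Hq := sqrt_lt_R0 _ Hs). assert (Hsq := sqrt_sqrt sigma ltac:(lra)).
  assert (Hd : is_derive (fun r' => besselI 0 (r' / sqrt sigma)) r
                 (/ sqrt sigma *
                  (clifford' (r / sqrt sigma * (r / sqrt sigma) / 4) * (r / sqrt sigma / 2)))).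
  { apply (is_derive_comp (besselI 0) (fun r' => r' / sqrt sigma)); [apply is_derive_besselI0 |].
    auto_derive; [exact I | field; lra]. }
  rewrite (is_derive_unique (fun r' : R => besselI 0 (r' / sqrt sigma)) r _ Hd).
  rewrite div_sqrt_sq_div_4 by exact Hs.
  rewrite <- Hsq at 1. field. lra.
Qed.

Lemma ntd_mult0_eq (sigma r1 : R) : 0 < sigma ->
  let u := r1 * r1 / (4 * sigma) in
  ntd_mult sigma r1 0 =
    (clifford u * Dn01 0 1 r1 - clifford' u * (r1 / 2) * Dn 0 1 r1) /
    (clifford u * Dn11 0 1 r1 - clifford' u * (r1 / 2) * Dn10 0 1 r1).
Proof.
  intros Hs u. unfold ntd_mult.
  rewrite besselI0_scaled, Derive_besselI0_scaled by exact Hs. reflexivity.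
Qed.

Section ModeZero.

Variable r1 : R.
Hypothesis r1_in_01 : 0 < r1 < 1.

Lemma mode0_numerator_neg (u : R) : 0 < u ->
  clifford u * Dn01 0 1 r1 - clifford' u * (r1 / 2) * Dn 0 1 r1 < 0.
Proof.
  intros Hu. assert (HP := Dn_pos 1 r1 ltac:(lra) ltac:(lra)).
  assert (HP' := Dn01_neg 1 r1 ltac:(lra) ltac:(lra)).
  assert (HC := clifford_ge_1 u ltac:(lra)). assert (HC' := clifford'_ge_1 u ltac:(lra)).
  assert (0 < clifford' u * (r1 / 2) * Dn 0 1 r1) by (repeat apply Rmult_lt_0_compat; lra).
  nra.
Qed.

Lemma Dn_cross_neq0 : Dn01 0 1 r1 * Dn10 0 1 r1 - Dn 0 1 r1 * Dn11 0 1 r1 <> 0.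
Proof.
  rewrite Dn_cross_eq by lra.
  assert (W1 := wronskian0_neg 1 ltac:(lra)). assert (Wr := wronskian0_neg r1 ltac:(lra)).
  apply Rlt_not_eq. nra.
Qed.

Lemma ntd_mult0_inj (sigma1 sigma2 : R) : 0 < sigma1 -> 0 < sigma2 ->
  ntd_mult sigma1 r1 0 = ntd_mult sigma2 r1 0 -> sigma1 = sigma2.
Proof.
  intros Hs1 Hs2 Heq.
  rewrite (ntd_mult0_eq sigma1), (ntd_mult0_eq sigma2) in Heq by assumption.
  set (u1 := r1 * r1 / (4 * sigma1)) in Heq. set (u2 := r1 * r1 / (4 * sigma2)) in Heq.
  assert (Hu1 : 0 < u1) by (apply Rdiv_lt_0_compat; nra).
  assert (Hu2 : 0 < u2) by (apply Rdiv_lt_0_compat; nra).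
  assert (Hmob := mobius_ratio_inj _ _ _ _ _ _ _ _
                    (Rlt_not_eq _ _ (mode0_numerator_neg u1 Hu1))
                    (Rlt_not_eq _ _ (mode0_numerator_neg u2 Hu2)) Dn_cross_neq0 Heq).
  assert (Hratio : clifford_ratio u1 = clifford_ratio u2).
  { unfold clifford_ratio. assert (HC1 := clifford_ge_1 u1 ltac:(lra)).
    assert (HC2 := clifford_ge_1 u2 ltac:(lra)).
    replace (clifford' u1 / clifford u1)
      with (clifford u2 * (clifford' u1 * (r1 / 2)) / (clifford u1 * clifford u2 * (r1 / 2)))
      by (field; lra).
    rewrite <- Hmob. field. lra. }
  assert (Hu := clifford_ratio_inj u1 u2 Hu1 Hu2 Hratio). unfold u1, u2 in Hu.
  replace sigma1 with (r1 * r1 / 4 / (r1 * r1 / (4 * sigma1))) by (field; lra).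
  rewrite Hu. field. lra.
Qed.

End ModeZero.

Lemma ex_series_0 : ex_series (fun _ : nat => 0).
Proof.
  apply (ex_series_ext (fun n => (/ 2) ^ n * 0)); [intros n; apply Rmult_0_r |].
  apply ex_series_scal_r, ex_series_geom. rewrite Rabs_pos_eq; lra.
Qed.

Definition mode0 (n : Z) : C := if Z.eqb n 0 then RtoC 1 else RtoC 0.

Lemma in_Hmhalf_mode0 : in_Hmhalf mode0.
Proof.
  split; apply ex_series_incr_1; refine (ex_series_ext _ _ _ ex_series_0);
    intros n; unfold mode0; simpl; rewrite Cmod_0; unfold Rdiv; rewrite !Rmult_0_l;
    reflexivity.
Qed.

Theorem theorem2p2 (r1 sigma1 sigma2 : R) :
  0 < r1 < 1 -> 0 < sigma1 -> 0 < sigma2 ->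
  (forall g : Z -> C, in_Hmhalf g -> NtD sigma1 r1 g = NtD sigma2 r1 g) ->
  sigma1 = sigma2.
Proof.
  intros Hr Hs1 Hs2 HNtD. apply (ntd_mult0_inj r1); [assumption .. |].
  assert (Hmode := f_equal (fun h => fst (h 0%Z)) (HNtD mode0 in_Hmhalf_mode0)).
  unfold NtD, mode0 in Hmode. simpl in Hmode. lra.
Qed.
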